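(* Fix $M\in\mathbb{N}^+$ and consider relative value iteration on the truncated MDP $\Lambda^M$: let $V_0(s)=0$ for all $s\in\{1,\dots,M\}$ and, for $v\ge0$ and $s\in\{1,\dots,M\}$, $$V_{v+1}(s)=\min_{a\in\mathcal{A}}\Big[u(s,a)+Q_aV_v(1)+(1-Q_a)V_v(\min\{s+1,M\})-V_v(1)\Big],$$ and let $\phi^{(v)}(s)$ be any minimizer $a$ of the bracket $u(s,a)+Q_aV_v(1)+(1-Q_a)V_v(\min\{s+1,M\})$ over $a\in\mathcal{A}$. Then for every $v\ge0$ and all states $1\le s_1<s_2\le M$, $Q_{\phi^{(v)}(s_1)}\le Q_{\phi^{(v)}(s_2)}$.
   Context: Fix $N\in\mathbb{N}^+$ vehicle types $\mathcal{N}=\{1,\dots,N\}$ with arrival probabilities $p_n\in(0,1]$, mean operational costs $c_n\ge0$ and mean sensing capabilities $r_n\in(0,1]$. Fix $\beta\in(0,1)$, $\epsilon>0$. Actions: $\mathcal{A}=2^{\mathcal{N}}$. Success probability $Q_\emptyset=0$, $Q_a=1-\prod_{n\in a}(1-r_np_n)$; expected recruitment cost $E_a=\sum_{n\in a}p_nc_n$. Immediate cost at state $\delta\in\mathbb{N}^+$: $u(\delta,a)=(1-\beta)E_a-\beta\epsilon\big(Q_a(\delta^2+2\delta)-(1+\delta)^2\big)$. The truncated MDP $\Lambda^M$ has state space $\{1,\dots,M\}$, action space $\mathcal{A}$, immediate cost $u$, and transitions: from state $s$ under action $a$, go to state $1$ with probability $Q_a$ and to state $\min\{s+1,M\}$ with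 probability $1-Q_a$. *)

From HB Require Import structures.
From mathcomp Require Import all_boot all_order all_algebra.
Set Implicit Arguments. Unset Strict Implicit. Unset Printing Implicit Defensive.
Import Order.TTheory GRing.Theory Num.Theory.
Local Open Scope ring_scope.

Section MDP.
Variables (R : realFieldType) (N : nat).
Variables (p c r : 'I_N -> R) (beta eps : R).

(* actions: subsets of the vehicle types {1..N}, encoded as 'I_N *)
Definition Qa (a : {set 'I_N}) : R := 1 - \prod_(n in a) (1 - r n * p n).
Definition Ea (a : {set 'I_N}) : R := \sum_(n in a) p n * c n.

Definition ucost (d : nat) (a : {set 'I_N}) : R :=
  (1 - beta) * Ea a
  - beta * eps * (Qa a * ((d%:R) ^+ 2 + 2 * d%:R) - (1 + d%:R) ^+ 2).

Definition bracket (M : nat) (V : nat -> R) (s : nat) (a : {set 'I_N}) : R :=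
  ucost s a + Qa a * V 1%N + (1 - Qa a) * V (minn s.+1 M).

Definition minbracket (M : nat) (V : nat -> R) (s : nat) : R :=
  \big[Order.min/bracket M V s set0]_(a : {set 'I_N}) bracket M V s a.

Fixpoint RVI (M : nat) (v : nat) : nat -> R :=
  match v with
  | O => fun _ => 0
  | v'.+1 => fun s => minbracket M (RVI M v') s - RVI M v' 1%N
  end.

Definition is_minimizer (M v s : nat) (a : {set 'I_N}) : Prop :=
  forall b : {set 'I_N}, bracket M (RVI M v) s a <= bracket M (RVI M v) s b.

End MDP.

(** The bracket splits as [A(a) + (1 - Q_a) g(s)], where [A] depends only on
    the action and [g(s) = beta eps (s^2 + 2s) + V(min(s+1, M))] only on the
    state.  By induction on the iteration every [V_v] is nondecreasing, so [g]
    is strictly increasing; comparing the two minimality conditions at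
    [s1 < s2] then forces the weight [1 - Q_a] of the minimizer to decrease,
    i.e. [Q_a] to increase. *)
From HB Require Import structures.
From mathcomp Require Import all_boot all_order all_algebra.
From mathcomp Require Import zify ring lra.
Set Implicit Arguments. Unset Strict Implicit. Unset Printing Implicit Defensive.
Import Order.TTheory GRing.Theory Num.Theory.
Local Open Scope ring_scope.

Lemma minimizer_weight_antitone (R : numDomainType) (T : Type) (A w : T -> R)
    (g1 g2 : R) (a1 a2 : T) :
  g1 < g2 ->
  (forall b, A a1 + w a1 * g1 <= A b + w b * g1) ->
  (forall b, A a2 + w a2 * g2 <= A b + w b * g2) ->
  w a2 <= w a1.
Proof.
move=> lt_g min1 min2; have le1 := min1 a2; have le2 := min2 a1.
rewrite -subr_gt0 in lt_g; rewrite -subr_ge0 in le1; rewrite -subr_ge0 in le2.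
have : 0 <= (w a1 - w a2) * (g2 - g1).
  have -> : (w a1 - w a2) * (g2 - g1) =
    (A a1 + w a1 * g2 - (A a2 + w a2 * g2)) + (A a2 + w a2 * g1 - (A a1 + w a1 * g1))
    by ring.
  exact: addr_ge0.
by rewrite pmulr_lge0 // subr_ge0.
Qed.

Section RelativeValueIteration.
Variables (R : realFieldType) (N : nat) (p c r : 'I_N -> R) (beta eps : R).
Variable M : nat.

Local Notation Qa := (Qa p r).
Local Notation bracket := (bracket p c r beta eps M).
Local Notation minbracket := (minbracket p c r beta eps M).
Local Notation RVI := (RVI p c r beta eps M).

Definition action_cost (V : nat -> R) (a : {set 'I_N}) : R :=
  (1 - beta) * Ea p c a + beta * eps + Qa a * V 1%N.

Definition state_cost (V : nat -> R) (s : nat) : R :=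
  beta * eps * (s%:R ^+ 2 + 2 * s%:R) + V (minn s.+1 M).

Lemma bracket_split V s a :
  bracket V s a = action_cost V a + (1 - Qa a) * state_cost V s.
Proof. by rewrite /bracket /ucost /action_cost /state_cost; ring. Qed.

Lemma le_minbracket V s t :
  (forall a, bracket V s a <= bracket V t a) -> minbracket V s <= minbracket V t.
Proof.
move=> le_st; apply: le_bigmin => [|a _].
  exact: (bigmin_inf set0).
exact: (bigmin_inf a).
Qed.

Hypothesis rp_le1 : forall n, r n * p n <= 1.
Hypothesis beta_eps_gt0 : 0 < beta * eps.

Lemma Qa_le1 a : Qa a <= 1.
Proof.
rewrite /Qa gerBl; apply: prodr_ge0 => n _.
by rewrite subr_ge0 rp_le1.
Qed.

Lemma state_cost_lt V : {homo V : s t / (s <= t)%N >-> s <= t} ->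
  {homo state_cost V : s t / (s < t)%N >-> s < t}.
Proof.
move=> V_le s t lt_st; apply: ltr_leD.
  have lt_st' : s%:R < t%:R :> R by rewrite ltr_nat.
  have s_ge0 : 0 <= s%:R :> R by rewrite ler0n.
  by rewrite ltr_pM2l //; nra.
by apply: V_le; lia.
Qed.

Lemma RVI_nondecreasing v : {homo RVI v : s t / (s <= t)%N >-> s <= t}.
Proof.
elim: v => [//|v IHv] s t le_st /=.
rewrite lerD2r; apply: le_minbracket => a.
rewrite !bracket_split lerD2l; apply: ler_wpM2l; first by rewrite subr_ge0 Qa_le1.
move: le_st; rewrite leq_eqVlt => /predU1P[-> //|/(state_cost_lt IHv)/ltW //].
Qed.

Lemma Qa_minimizer_nondecreasing v s1 s2 a1 a2 : (s1 < s2)%N ->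
  is_minimizer p c r beta eps M v s1 a1 -> is_minimizer p c r beta eps M v s2 a2 ->
  Qa a1 <= Qa a2.
Proof.
move=> lt_s min1 min2; rewrite -lerN2 -(lerD2l 1).
apply: (@minimizer_weight_antitone _ _ (action_cost (RVI v)) (fun a => 1 - Qa a)
          (state_cost (RVI v) s1) (state_cost (RVI v) s2)).
- exact: (state_cost_lt (@RVI_nondecreasing v)).
- by move=> b; rewrite -!bracket_split; exact: min1.
- by move=> b; rewrite -!bracket_split; exact: min2.
Qed.

End RelativeValueIteration.

Theorem lemma3 (R : realFieldType) (N : nat) (p c r : 'I_N -> R) (beta eps : R)
  (HN : (0 < N)%N)
  (Hp : forall n, 0 < p n <= 1) (Hc : forall n, 0 <= c n)
  (Hr : forall n, 0 < r n <= 1)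
  (Hbeta : 0 < beta < 1) (Heps : 0 < eps)
  (M : nat) (HM : (0 < M)%N)
  (phi : nat -> nat -> {set 'I_N})
  (Hphi : forall v s, (1 <= s <= M)%N ->
            is_minimizer p c r beta eps M v s (phi v s)) :
  forall (v s1 s2 : nat), (1 <= s1)%N -> (s1 < s2)%N -> (s2 <= M)%N ->
    Qa p r (phi v s1) <= Qa p r (phi v s2).
Proof.
move=> v s1 s2 le1_s1 lt_s le_s2M.
have rp_le1 n : r n * p n <= 1.
  have /andP[r_gt0 r_le1] := Hr n; have /andP[p_gt0 p_le1] := Hp n.
  exact: mulr_ile1 (ltW r_gt0) (ltW p_gt0) r_le1 p_le1.
have beta_eps_gt0 : 0 < beta * eps by case/andP: Hbeta => beta_gt0 _; exact: mulr_gt0.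
apply: (Qa_minimizer_nondecreasing rp_le1 beta_eps_gt0 lt_s); apply: Hphi; lia.
Qed.
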